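(* Let $\mathbb{H}\in\{\mathbb{R},\mathbb{C}\}$ and consider $\bm{y}=\bm{A}\bm{x}+\bm{w}$ with $\bm{A}\in\mathbb{H}^{m\times n}$ having i.i.d. entries $\mathcal{N}(0,1/m)$ (resp. $\mathcal{CN}(0,1/m)$), $\bm{x}\sim\mathcal{N}(\bm 0,\sigma_x^2\bm I)$ (resp. $\mathcal{CN}(\bm 0,\sigma_x^2\bm I)$), and $\bm{w}\sim\mathcal{N}(\bm 0,\sigma_w^2\bm I)$ (resp. $\mathcal{CN}(\bm 0,\sigma_w^2\bm I)$) with $\sigma_w^2=\delta\sigma_0^2$, where $\delta=m/n$ and $\sigma_0^2>0$ is constant. Let the asymptotic MSE of the MMSE estimator be $$\mathrm{Err}(\delta)=\frac{\delta}{2}\left[\left(-\sigma_w^2+c\sigma_x^2\right)+\sqrt{\left(\sigma_w^2+c\sigma_x^2\right)^2+4\sigma_w^2\sigma_x^2}\right],\qquad c=\frac{1-\delta}{\delta},\ \sigma_w^2=\delta\sigma_0^2,$$ and let $\delta^\dagger$ be the value of $\delta>0$ minimizing $\mathrm{Err}(\delta)$. Then $\delta^{\dagger}<2$. Moreover, if $\sigma_x^2<2\sigma_0^2$, then $\delta^{\dagger}<1$.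
   Context: $\delta=m/n$ is the normalized number of measurements; the asymptotic regime is $m,n\to\infty$ with $m/n\to\delta$, and the MSE is $\lim_{n\to\infty}\frac1n\mathbb{E}\|\bm x-\hat{\bm x}\|^2$. *)

From mathcomp Require Import all_boot all_order all_algebra.
Import Order.TTheory GRing.Theory Num.Theory.
Local Open Scope ring_scope.

Definition Err {R : rcfType} (sx2 s02 d : R) : R :=
  let sw2 := d * s02 in
  let c := (1 - d) / d in
  d / 2 * ((- sw2 + c * sx2) + Num.sqrt ((sw2 + c * sx2) ^+ 2 + 4 * sw2 * sx2)).

From mathcomp Require Import all_boot all_order all_algebra.
From mathcomp Require Import ring lra.
Import Order.TTheory GRing.Theory Num.Theory.
Local Open Scope ring_scope.

(* Writing x = sx2, s = s02, Err(d) is the positive root F of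
   F^2 + (d^2 s + (d - 1) x) F - d^2 s x = 0, and Err(d) < y exactly when the
   left-hand side is positive at y.  For fixed F = Err(d), that left-hand side
   is a concave quadratic in d (since F < x), vanishing at d; unless d is its
   vertex v = x F / (2 s (x - F)), it is positive at v, so Err(v) < Err(d).
   A minimizer is therefore the vertex, F (2 d s + x) = 2 d s x, and feeding
   this back into the root equation leaves x (2 - d) = 2 d^2 s, from which both
   bounds on d follow. *)

Section MonicQuadratic.
Context {R : rcfType}.
Implicit Types b q y : R.

Definition quad b q y := y ^+ 2 - b * y - q.

Definition pos_root b q := (b + Num.sqrt (b ^+ 2 + 4 * q)) / 2.

Lemma quad_pos_root b q : 0 <= q -> quad b q (pos_root b q) = 0.
Proof.
move=> q_ge0; have disc_ge0 : 0 <= b ^+ 2 + 4 * q by rewrite addr_ge0 ?sqr_ge0 ?mulr_ge0.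
have sqrt_sq := sqr_sqrtr disc_ge0.
rewrite /quad /pos_root; set S := Num.sqrt _ in sqrt_sq *.
have -> : ((b + S) / 2) ^+ 2 - b * ((b + S) / 2) - q = (S ^+ 2 - (b ^+ 2 + 4 * q)) / 4.
  by field.
by rewrite sqrt_sq subrr mul0r.
Qed.

Lemma sub_pos_root_ge0 b q : 0 <= q -> 0 <= pos_root b q - b.
Proof.
move=> q_ge0; have : `|b| <= Num.sqrt (b ^+ 2 + 4 * q).
  by rewrite -sqrtr_sqr ler_wsqrtr // lerDl mulr_ge0.
rewrite /pos_root; have := ler_norm b; lra.
Qed.

Lemma pos_root_gt0 b q : 0 < q -> 0 < pos_root b q.
Proof.
move=> q_gt0; have : `|b| < Num.sqrt (b ^+ 2 + 4 * q).
  by rewrite -sqrtr_sqr ltr_sqrt; have := sqr_ge0 b; lra.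
rewrite /pos_root; have := ler_norm (- b); rewrite normrN; lra.
Qed.

Lemma pos_root_ltE b q y : 0 <= q -> 0 < y -> (pos_root b q < y) = (0 < quad b q y).
Proof.
move=> q_ge0 y_gt0; set r := pos_root b q.
have -> : quad b q y = (y - r) * (y + (r - b)).
  by rewrite -[LHS]subr0 -(quad_pos_root b q q_ge0) /quad -/r; ring.
by rewrite pmulr_lgt0 ?subr_gt0 // ltr_wpDr // sub_pos_root_ge0.
Qed.

End MonicQuadratic.

Section MMSE.
Variables (R : rcfType) (sx2 s02 : R).
Hypotheses (sx2_gt0 : 0 < sx2) (s02_gt0 : 0 < s02).
Implicit Types d y : R.

Definition Err_b d := (1 - d) * sx2 - d ^+ 2 * s02.
Definition Err_q d := d ^+ 2 * s02 * sx2.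

Lemma Err_q_gt0 d : 0 < d -> 0 < Err_q d.
Proof. by move=> d_gt0; rewrite /Err_q !mulr_gt0 ?exprn_gt0. Qed.

Lemma Err_pos_root d : 0 < d -> Err sx2 s02 d = pos_root (Err_b d) (Err_q d).
Proof.
move=> d_gt0; have d_neq0 : d != 0 by rewrite gt_eqF.
rewrite /Err /pos_root /Err_b /Err_q /=; set Q := _ + 4 * _ * _.
have -> : ((1 - d) * sx2 - d ^+ 2 * s02) ^+ 2 + 4 * (d ^+ 2 * s02 * sx2) = d ^+ 2 * Q.
  by rewrite /Q; field.
by rewrite sqrtrM ?sqr_ge0 // sqrtr_sqr gtr0_norm //; field.
Qed.

Lemma Err_gt0 d : 0 < d -> 0 < Err sx2 s02 d.
Proof. by move=> d_gt0; rewrite Err_pos_root // pos_root_gt0 ?Err_q_gt0. Qed.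

Lemma quad_Err d : 0 < d -> quad (Err_b d) (Err_q d) (Err sx2 s02 d) = 0.
Proof. by move=> d_gt0; rewrite Err_pos_root // quad_pos_root // ltW ?Err_q_gt0. Qed.

Lemma Err_ltE d y : 0 < d -> 0 < y ->
  (Err sx2 s02 d < y) = (0 < quad (Err_b d) (Err_q d) y).
Proof. by move=> d_gt0 y_gt0; rewrite Err_pos_root // pos_root_ltE // ltW ?Err_q_gt0. Qed.

Lemma Err_lt_sx2 d : 0 < d -> Err sx2 s02 d < sx2.
Proof.
move=> d_gt0; rewrite Err_ltE //.
have -> : quad (Err_b d) (Err_q d) sx2 = d * sx2 ^+ 2 by rewrite /quad /Err_b /Err_q; ring.
by rewrite mulr_gt0 ?exprn_gt0.
Qed.

Lemma argmin_Err_vertex d : 0 < d ->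
  (forall d', 0 < d' -> Err sx2 s02 d <= Err sx2 s02 d') ->
  Err sx2 s02 d * (2 * d * s02 + sx2) = 2 * d * s02 * sx2.
Proof.
move=> d_gt0 d_min; set F := Err sx2 s02 d.
have F_gt0 : 0 < F by exact: Err_gt0.
have gap_gt0 : 0 < s02 * (sx2 - F) by rewrite mulr_gt0 ?subr_gt0 ?Err_lt_sx2.
set v := sx2 * F / (2 * (s02 * (sx2 - F))).
have den_gt0 : 0 < 2 * (s02 * (sx2 - F)) by apply: mulr_gt0.
have v_gt0 : 0 < v by apply: divr_gt0 => //; apply: mulr_gt0.
have vE : 2 * (s02 * (sx2 - F)) * v = sx2 * F by rewrite /v mulrC divfK // gt_eqF.
have quad_v : quad (Err_b v) (Err_q v) F = s02 * (sx2 - F) * (v - d) ^+ 2.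
  rewrite -[LHS]subr0 -(quad_Err _ d_gt0) -/F.
  transitivity ((v - d) * (s02 * (F - sx2) * (v + d) + sx2 * F)).
    by rewrite /quad /Err_b /Err_q; ring.
  by rewrite -vE; ring.
have v_eq_d : v = d.
  apply/eqP; apply: contraT => v_neq_d.
  have : Err sx2 s02 v < F.
    by rewrite Err_ltE // quad_v pmulr_rgt0 // exprn_even_gt0 // subr_eq0.
  by rewrite ltNge d_min.
by move: vE; rewrite v_eq_d => vE; lra.
Qed.

Lemma argmin_Err_eq d : 0 < d ->
  (forall d', 0 < d' -> Err sx2 s02 d <= Err sx2 s02 d') ->
  sx2 * (2 - d) = 2 * d ^+ 2 * s02.
Proof.
move=> d_gt0 d_min; set F := Err sx2 s02 d; set K := 2 * d * s02 + sx2.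
have KF : F * K = 2 * d * s02 * sx2 := argmin_Err_vertex _ d_gt0 d_min.
have : K ^+ 2 * quad (Err_b d) (Err_q d) F =
       d * s02 * sx2 ^+ 2 * (2 * d ^+ 2 * s02 - sx2 * (2 - d)).
  transitivity ((F * K) ^+ 2 - (Err_b d) * K * (F * K) - Err_q d * K ^+ 2).
    by rewrite /quad; ring.
  by rewrite KF /Err_b /Err_q /K; ring.
rewrite quad_Err // mulr0 => /esym/eqP; rewrite mulf_eq0 subr_eq0 => /orP[|/eqP-> //].
by rewrite gt_eqF // !mulr_gt0 ?exprn_gt0.
Qed.

End MMSE.

Theorem proposition1 (R : rcfType) (sx2 s02 ddag : R) :
  0 < sx2 -> 0 < s02 -> 0 < ddag ->
  (forall d : R, 0 < d -> Err sx2 s02 ddag <= Err sx2 s02 d) ->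
  ddag < 2 /\ (sx2 < 2 * s02 -> ddag < 1).
Proof.
move=> sx2_gt0 s02_gt0 ddag_gt0 ddag_min.
have ddag_eq : sx2 * (2 - ddag) = 2 * ddag ^+ 2 * s02 by exact: argmin_Err_eq.
have : 0 < sx2 * (2 - ddag) by rewrite ddag_eq !mulr_gt0 ?exprn_gt0.
rewrite pmulr_rgt0 // subr_gt0 => ddag_lt2.
split=> // sx2_lt.
have : s02 * ddag ^+ 2 < s02 * (2 - ddag) by nra.
by rewrite ltr_pM2l // => ddag_sq_lt; nra.
Qed.
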